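(* Let $s$ be a bounded continuous proper scoring rule with convex exposure on an $n$-outcome forecast domain $\mathcal{D}$, with exposure function $\mathbf{g}$, and let $M$ be an upper bound on $\|\mathbf{g}\|_2$ over $\mathcal{D}$. For time steps $t=1,\dots,T$, an agent chooses a weight vector $\mathbf{w}^t\in\Delta^m$, after which forecasts $\mathbf{p}_1^t,\dots,\mathbf{p}_m^t\in\mathcal{D}$ and an outcome $j^t\in[n]$ are chosen adversarially and the agent receives score $s(\mathbf{p}^*_t(\mathbf{w}^t);j^t)$, where $\mathbf{p}^*_t(\mathbf{w})$ denotes the QA pool of $(\mathbf{p}_i^t,w_i)_{i=1}^m$ with respect to $\mathbf{g}$. Let $L^t(\mathbf{w}):=-s(\mathbf{p}^*_t(\mathbf{w});j^t)$. Suppose the agent plays as follows: $\mathbf{w}^1\in\Delta^m$ is arbitrary, and for each $t$, with $\eta_t:=\frac{1}{M\sqrt{mt}}$, it sets $\tilde{\mathbf{w}}^{t+1}=\mathbf{w}^t-\eta_t\nabla L^t(\mathbf{w}^t)$ and lets $\mathbf{w}^{t+1}$ be $\tilde{\mathbf{w}}^{t+1}$ if it lies in $\Delta^m$ and otherwise the orthogonal (Euclidean) projection of $\tilde{\mathbf{w}}^{t+1}$ onto $\Delta^m$. Then for every $\mathbf{w}^*\in\Delta^m$, \[\sum_{t=1}^T\Big(s(\mathbf{p}^*_t(\mathbf{w}^* );j^t)-s(\mathbf{p}^*_t(\mathbf{w}^t);j^t)\Big)\le 3\sqrt{m}\,M\sqrt{T}.\]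
   Context: $\Delta^k$ is the standard simplex in $\mathbb{R}^k$. An $n$-outcome forecast domain is a convex $(n-1)$-dimensional subset of $\Delta^n$. A proper scoring rule on $\mathcal{D}$ is $s:\mathcal{D}\times[n]\to\mathbb{R}$ with $\sum_j p(j)s(\mathbf{p};j)\ge\sum_j p(j)s(\mathbf{x};j)$ for all $\mathbf{p},\mathbf{x}\in\mathcal{D}$, equality only if $\mathbf{x}=\mathbf{p}$. $G(\mathbf{p}):=\sum_j p(j)s(\mathbf{p};j)$ is differentiable and strictly convex; the exposure function is $\mathbf{g}=\nabla G$, with values understood modulo translation by the all-ones vector (equivalently projected onto $\{\mathbf{x}:\sum_i x_i=0\}$). Convex exposure: range of $\mathbf{g}$ is convex. The QA pool of $(\mathbf{p}_i,w_i)$ is the unique $\mathbf{p}^*\in\mathcal{D}$ with $\mathbf{g}(\mathbf{p}^* )=\sum_i w_i\mathbf{g}(\mathbf{p}_i)$ (modulo the all-ones vector). The gradient $\nabla L^t$ is taken with respect to $\mathbf{w}$ and is likewise interpreted modulo translation by the all-ones vector in $\mathbb{R}^m$. *)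

From HB Require Import structures.
From mathcomp Require Import all_boot all_order all_algebra.
From mathcomp Require Import boolp classical_sets reals.
Set Implicit Arguments. Unset Strict Implicit. Unset Printing Implicit Defensive.
Import Order.TTheory GRing.Theory Num.Theory.
Local Open Scope ring_scope.
Local Open Scope classical_set_scope.

Section Defs.
Variable R : realType.

Definition dot k (x y : 'rV[R]_k) : R := \sum_(i < k) x ord0 i * y ord0 i.
Definition norm2 k (x : 'rV[R]_k) : R := Num.sqrt (dot x x).

Definition simplex k : set 'rV[R]_k :=
  [set x | (forall i, 0 <= x ord0 i) /\ \sum_(i < k) x ord0 i = 1].
Arguments simplex k : clear implicits.

Definition convex_set k (A : set 'rV[R]_k) : Prop :=
  forall x y, A x -> A y -> forall l : R, 0 <= l <= 1 ->
    A (l *: x + (1 - l) *: y).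

(* n-outcome forecast domain: a convex (n-1)-dimensional subset of Delta^n.
   (n-1)-dimensional: its affine hull has dimension n-1, i.e. there are a
   point p of D and n-1 points x_i of D with x_i - p linearly independent. *)
Definition forecast_domain n (D : set 'rV[R]_n) : Prop :=
  convex_set D /\ D `<=` simplex n /\
  exists (p : 'rV[R]_n) (x : 'I_n.-1 -> 'rV[R]_n),
    D p /\ (forall i, D (x i)) /\
    row_free (\matrix_(i < n.-1) (x i - p)).

Definition expected_score n (s : 'rV[R]_n -> 'I_n -> R) (p : 'rV[R]_n) : R :=
  \sum_(j < n) p ord0 j * s p j.

Definition proper_scoring_rule n (D : set 'rV[R]_n) (s : 'rV[R]_n -> 'I_n -> R)
  : Prop :=
  forall p x, D p -> D x ->
    \sum_(j < n) p ord0 j * s x j <= \sum_(j < n) p ord0 j * s p j /\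
    (\sum_(j < n) p ord0 j * s x j = \sum_(j < n) p ord0 j * s p j -> x = p).

Definition bounded_scoring_rule n (D : set 'rV[R]_n) (s : 'rV[R]_n -> 'I_n -> R)
  : Prop :=
  exists B : R, forall p j, D p -> `|s p j| <= B.

Definition continuous_scoring_rule n (D : set 'rV[R]_n)
  (s : 'rV[R]_n -> 'I_n -> R) : Prop :=
  forall j p, D p -> forall eps : R, 0 < eps -> exists2 delta : R, 0 < delta &
    forall q, D q -> norm2 (q - p) < delta -> `|s q j - s p j| < eps.

Definition strictly_convex_on k (A : set 'rV[R]_k) (f : 'rV[R]_k -> R) : Prop :=
  forall x y, A x -> A y -> x <> y -> forall l : R, 0 < l < 1 ->
    f (l *: x + (1 - l) *: y) < l * f x + (1 - l) * f y.

(* When A is convex and full-dimensional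
   in the hyperplane {sum = 1}, d is determined exactly modulo the all-ones
   vector. *)
Definition rel_gradient k (A : set 'rV[R]_k) (f : 'rV[R]_k -> R)
  (x d : 'rV[R]_k) : Prop :=
  forall eps : R, 0 < eps -> exists2 delta : R, 0 < delta &
    forall y, A y -> norm2 (y - x) < delta ->
      `|f y - f x - dot d (y - x)| <= eps * norm2 (y - x).

(* g is the exposure function of s on D: g = grad G, taken with the
   representative projected onto {x : sum_i x_i = 0}. *)
Definition exposure_function n (D : set 'rV[R]_n) (s : 'rV[R]_n -> 'I_n -> R)
  (g : 'rV[R]_n -> 'rV[R]_n) : Prop :=
  forall p, D p ->
    \sum_(i < n) g p ord0 i = 0 /\ rel_gradient D (expected_score s) p (g p).

Definition convex_exposure n (D : set 'rV[R]_n) (g : 'rV[R]_n -> 'rV[R]_n)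
  : Prop := convex_set (g @` D).

Definition QA_pool n m (D : set 'rV[R]_n) (g : 'rV[R]_n -> 'rV[R]_n)
  (ps : 'I_m -> 'rV[R]_n) (w : 'rV[R]_m) : 'rV[R]_n :=
  xget 0 [set p | D p /\ g p = \sum_(i < m) w ord0 i *: g (ps i)].

Definition QA_loss n m (D : set 'rV[R]_n) (s : 'rV[R]_n -> 'I_n -> R)
  (g : 'rV[R]_n -> 'rV[R]_n) (ps : 'I_m -> 'rV[R]_n) (j : 'I_n)
  (w : 'rV[R]_m) : R :=
  - s (QA_pool D g ps w) j.

Definition is_projection k (A : set 'rV[R]_k) (x w' : 'rV[R]_k) : Prop :=
  A w' /\ forall y, A y -> norm2 (x - w') <= norm2 (x - y).

Definition ogd_update m (wt w' : 'rV[R]_m) : Prop :=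
  (simplex m wt -> w' = wt) /\ (~ simplex m wt -> is_projection (simplex m) wt w').

Definition step_size (M : R) (m t : nat) : R := 1 / (M * Num.sqrt (m%:R * t%:R)).

End Defs.
Arguments simplex {R} k.

From HB Require Import structures.
From mathcomp Require Import all_boot all_order all_algebra.
From mathcomp Require Import boolp classical_sets reals.
From mathcomp Require Import ring lra.
Import Order.TTheory GRing.Theory Num.Theory.
Local Open Scope ring_scope.
Local Open Scope classical_set_scope.
Set Implicit Arguments. Unset Strict Implicit. Unset Printing Implicit Defensive.

(* Both the score vector s(p; .) and the exposure g(p) are subgradients of the
   expected score G at p (the first by properness, the second because G is
   convex), and continuity of s forces them to agree on the hyperplane
   {sum = 0}, which the forecast domain spans.  Since the QA pool averages
   exposures, properness then makes the loss L^t(w) = -s(p*_t(w); j^t) convex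
   in w, with the explicit subgradient k |-> <p*_t(w) - e_j, g(p_k)>, whose
   squared norm is at most 2 m M^2.  The agent's relative gradient differs from
   it only by a vector that the projection onto the simplex absorbs, so
   Zinkevich's telescoping argument for projected gradient descent with steps
   1/(M sqrt(m t)) bounds the regret by 3 sqrt m M sqrt T. *)

Section InnerProduct.
Variables (R : realType) (k : nat).
Implicit Types (a : R) (x y z : 'rV[R]_k).

Lemma dotC x y : dot x y = dot y x.
Proof. by apply: eq_bigr => i _; rewrite mulrC. Qed.

Lemma dotDl x y z : dot (x + y) z = dot x z + dot y z.
Proof. by rewrite /dot -big_split; apply: eq_bigr => i _; rewrite !mxE mulrDl. Qed.

Lemma dotNl x z : dot (- x) z = - dot x z.
Proof. by rewrite /dot -sumrN; apply: eq_bigr => i _; rewrite !mxE mulNr. Qed.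

Lemma dotBl x y z : dot (x - y) z = dot x z - dot y z.
Proof. by rewrite dotDl dotNl. Qed.

Lemma dotZl a x z : dot (a *: x) z = a * dot x z.
Proof. by rewrite /dot mulr_sumr; apply: eq_bigr => i _; rewrite !mxE mulrA. Qed.

Lemma dotDr x y z : dot z (x + y) = dot z x + dot z y.
Proof. by rewrite dotC dotDl !(dotC z). Qed.

Lemma dotNr x z : dot z (- x) = - dot z x.
Proof. by rewrite dotC dotNl dotC. Qed.

Lemma dotBr x y z : dot z (x - y) = dot z x - dot z y.
Proof. by rewrite dotDr dotNr. Qed.

Lemma dotZr a x z : dot z (a *: x) = a * dot z x.
Proof. by rewrite dotC dotZl dotC. Qed.

Lemma dot0r x : dot x 0 = 0.
Proof. by rewrite /dot big1 // => i _; rewrite mxE mulr0. Qed.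

Lemma dot_sumr m x (f : 'I_m -> 'rV[R]_k) :
  dot x (\sum_(i < m) f i) = \sum_(i < m) dot x (f i).
Proof.
elim: m f => [|m IH] f; first by rewrite !big_ord0 dot0r.
by rewrite !big_ord_recr /= dotDr IH.
Qed.

Lemma dot_ge0 x : 0 <= dot x x.
Proof. by apply: sumr_ge0 => i _; rewrite -expr2 sqr_ge0. Qed.

Lemma norm2_ge0 x : 0 <= norm2 x.
Proof. exact: sqrtr_ge0. Qed.

Lemma norm2Z a x : 0 <= a -> norm2 (a *: x) = a * norm2 x.
Proof.
move=> a0; rewrite /norm2 dotZl dotZr mulrA sqrtrM ?mulr_ge0 //.
by rewrite -expr2 sqrtr_sqr ger0_norm.
Qed.

Lemma ler_norm2_dot x y : (norm2 x <= norm2 y) = (dot x x <= dot y y).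
Proof. by rewrite /norm2 ler_sqrt // dot_ge0. Qed.

Lemma dot_le_sqr_norm2 x M : norm2 x <= M -> dot x x <= M ^+ 2.
Proof.
move=> xM; rewrite -[dot x x]sqr_sqrtr ?dot_ge0 // -/(norm2 x).
by rewrite ler_sqr ?nnegrE ?norm2_ge0 // (le_trans (norm2_ge0 x)).
Qed.

Lemma dot_sqrD x y : dot (x + y) (x + y) = dot x x + 2 * dot x y + dot y y.
Proof. by rewrite !(dotDl, dotDr) (dotC y x); ring. Qed.

Lemma dot_sqrBZ a x y :
  dot (x - a *: y) (x - a *: y) = dot x x - 2 * a * dot x y + a ^+ 2 * dot y y.
Proof. by rewrite !(dotBl, dotBr, dotZl, dotZr) (dotC y x); ring. Qed.

Lemma dot_eq0 x : dot x x = 0 -> x = 0.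
Proof.
move=> x0; apply/rowP => i; rewrite mxE.
have sq_ge0 j : true -> 0 <= x ord0 j * x ord0 j by rewrite -expr2 sqr_ge0.
have /eqP := @psumr_eq0P _ _ _ _ sq_ge0 x0 i isT.
by rewrite mulf_eq0 orbb => /eqP.
Qed.

Lemma CauchySchwarz x y : dot x y ^+ 2 <= dot x x * dot y y.
Proof.
have [x0|xx_neq0] := eqVneq (dot x x) 0.
  by rewrite x0 (dot_eq0 x0) dotC dot0r expr0n mul0r.
have xx_gt0 : 0 < dot x x by rewrite lt_def xx_neq0 dot_ge0.
have := dot_ge0 (y - (dot x y / dot x x) *: x).
rewrite dot_sqrBZ (dotC y x) => h.
have e : dot x y / dot x x * dot x x = dot x y by rewrite divfK // gt_eqF.
nra.
Qed.

End InnerProduct.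

Lemma le_of_le_add_eps (R : realType) (a b c : R) :
  0 <= c -> (forall eps, 0 < eps -> a <= b + eps * c) -> a <= b.
Proof.
move=> c0 H; apply/ler_addgt0Pr => e e0.
have c1 : 0 < c + 1 by lra.
have := H (e / (c + 1)) (divr_gt0 e0 c1).
suff : e / (c + 1) * c <= e by lra.
by rewrite mulrAC ler_pdivrMr //; nra.
Qed.

Lemma exists_small_step (R : realType) (N delta : R) :
  0 <= N -> 0 < delta -> exists2 t : R, 0 < t <= 1 & t * N < delta.
Proof.
move=> N0 d0; have Nd : 0 < N + delta by lra.
exists (delta / (N + delta)); last by rewrite mulrAC ltr_pdivrMr //; nra.
by rewrite divr_gt0 //= ler_pdivrMr // mul1r; lra.
Qed.

Section Convexity.
Variables (R : realType) (k : nat).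
Implicit Types (A : set 'rV[R]_k) (f : 'rV[R]_k -> R) (x y d u : 'rV[R]_k).

Definition convex_on A f := forall x y (t : R), A x -> A y -> 0 <= t <= 1 ->
  f (x + t *: (y - x)) <= f x + t * (f y - f x).

Definition is_subgradient A f x u := forall y, A y -> f x + dot u (y - x) <= f y.

Lemma convex_segment A x y (t : R) :
  convex_set A -> A x -> A y -> 0 <= t <= 1 -> A (x + t *: (y - x)).
Proof.
move=> cA Ax Ay t01.
have -> : x + t *: (y - x) = t *: y + (1 - t) *: x by apply/rowP => i; rewrite !mxE; ring.
exact: cA.
Qed.

Lemma rel_gradient_segment A f x y d (eps : R) :
  convex_set A -> A x -> A y -> rel_gradient A f x d -> 0 < eps ->
  exists t : R, [/\ 0 < t <= 1, A (x + t *: (y - x)) &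
    `|f (x + t *: (y - x)) - f x - t * dot d (y - x)| <= eps * (t * norm2 (y - x))].
Proof.
move=> cA Ax Ay fd e0; have [delta d0 Hd] := fd eps e0.
have [t /andP[t0 t1] tN] := exists_small_step (norm2_ge0 (y - x)) d0.
exists t; split; rewrite ?t0 //; first by apply: convex_segment; rewrite // ltW.
set z := x + t *: (y - x).
have zx : t *: (y - x) = z - x by rewrite /z addrAC subrr add0r.
rewrite -dotZr -(norm2Z _ (ltW t0)) zx; apply: Hd.
  by apply: convex_segment; rewrite // ltW.
by rewrite -zx norm2Z // ltW.
Qed.

Lemma subgradient_convex_on A f : convex_set A ->
  (forall x, A x -> exists u, is_subgradient A f x u) -> convex_on A f.
Proof.
move=> cA sg x y t Ax Ay /andP[t0 t1].
set z := x + t *: (y - x); have Az : A z by apply: convex_segment; rewrite ?t0.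
have [u Hu] := sg z Az.
have hx := Hu x Ax; have hy := Hu y Ay.
have xz : x - z = - t *: (y - x) by rewrite /z opprD addrA subrr add0r scaleNr.
have yz : y - z = (1 - t) *: (y - x) by apply/rowP => i; rewrite /z !mxE; ring.
rewrite xz dotZr in hx; rewrite yz dotZr in hy; nra.
Qed.

Lemma rel_gradient_subgradient A f x d : convex_set A -> convex_on A f -> A x ->
  rel_gradient A f x d -> is_subgradient A f x d.
Proof.
move=> cA cf Ax fd y Ay; apply: (le_of_le_add_eps (norm2_ge0 (y - x))) => eps e0.
have [t [/andP[t0 t1] Az]] := rel_gradient_segment cA Ax Ay fd e0.
rewrite ler_norml => /andP[lo _].
have hc := cf x y t Ax Ay ltac:(by rewrite (ltW t0) t1).
suff : t * (f x + dot d (y - x)) <= t * (f y + eps * norm2 (y - x)).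
  by rewrite ler_pM2l.
nra.
Qed.

Lemma subgradient_le_rel_gradient A f x y d u : convex_set A -> A x -> A y ->
  rel_gradient A f x d -> is_subgradient A f x u -> dot u (y - x) <= dot d (y - x).
Proof.
move=> cA Ax Ay fd fu; apply: (le_of_le_add_eps (norm2_ge0 (y - x))) => eps e0.
have [t [/andP[t0 _] Az]] := rel_gradient_segment cA Ax Ay fd e0.
rewrite ler_norml => /andP[_ hi].
have := fu _ Az; rewrite addrAC subrr add0r dotZr => hu.
suff : t * dot u (y - x) <= t * (dot d (y - x) + eps * norm2 (y - x)).
  by rewrite ler_pM2l.
nra.
Qed.

Lemma convex_set_comb A m (l : 'I_m -> R) (c : 'I_m -> 'rV[R]_k) :
  convex_set A -> (forall i, 0 <= l i) -> \sum_i l i = 1 -> (forall i, A (c i)) ->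
  A (\sum_i l i *: c i).
Proof.
move=> cA; elim: m l c => [|m IH] l c l0 l1 Ac.
  by move: l1; rewrite big_ord0 => /eqP; rewrite eq_sym oner_eq0.
rewrite big_ord_recr /=; move: l1; rewrite big_ord_recr /=.
set a := l ord_max; set S := \sum_(i < m) _ => l1.
have S0 : 0 <= S by apply: sumr_ge0 => i _.
have [S_eq0|S_neq0] := eqVneq S 0.
  have lw0 i : l (widen_ord (leqnSn m) i) = 0.
    exact: (psumr_eq0P (fun i _ => l0 (widen_ord (leqnSn m) i)) S_eq0).
  rewrite big1 => [|i _]; last by rewrite lw0 scale0r.
  by rewrite add0r (_ : a = 1) ?scale1r //; lra.
have S_gt0 : 0 < S by rewrite lt_def S_neq0.
have Ac' := IH (fun i => l (widen_ord (leqnSn m) i) / S) (fun i => c (widen_ord (leqnSn m) i))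
  (fun i => divr_ge0 (l0 _) S0) ltac:(by rewrite -mulr_suml divff) (fun i => Ac _).
have -> : \sum_(i < m) l (widen_ord (leqnSn m) i) *: c (widen_ord (leqnSn m) i)
    = S *: \sum_(i < m) (l (widen_ord (leqnSn m) i) / S) *: c (widen_ord (leqnSn m) i).
  rewrite scaler_sumr; apply: eq_bigr => i _.
  by rewrite scalerA mulrC divfK.
have Sa : S = 1 - a by lra.
rewrite addrC {1}Sa; apply: cA => //; rewrite l0 /=; lra.
Qed.

Lemma projection_obtuse A z P y : convex_set A -> is_projection A z P -> A y ->
  dot (z - P) (y - P) <= 0.
Proof.
move=> cA [AP HP] Ay; set c := dot (z - P) (y - P); set q := dot (y - P) (y - P).
have q0 : 0 <= q by apply: dot_ge0.
suff : 2 * c <= 0 by lra.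
apply: (le_of_le_add_eps q0) => eps e0.
have [l /andP[l0 l1] leps] := exists_small_step ler01 e0; rewrite mulr1 in leps.
have Al : A (P + l *: (y - P)) by apply: convex_segment; rewrite // (ltW l0) l1.
have := HP _ Al.
rewrite ler_norm2_dot opprD addrA dot_sqrBZ -/c -/q => h.
suff : l * (2 * c) <= l * (l * q) by rewrite ler_pM2l //; nra.
nra.
Qed.

Lemma projection_pythagoras A z P y : convex_set A -> is_projection A z P -> A y ->
  dot (z - P) (z - P) + dot (P - y) (P - y) <= dot (z - y) (z - y).
Proof.
move=> cA pr Ay; have := projection_obtuse cA pr Ay.
have -> : z - y = (z - P) + (P - y) by rewrite addrA subrK.
have : dot (z - P) (P - y) = - dot (z - P) (y - P) by rewrite -dotNr opprB.
have := dot_sqrD (z - P) (P - y); lra.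
Qed.

End Convexity.

Section Simplex.
Variable R : realType.

Lemma simplex_convex m : convex_set (simplex m : set 'rV[R]_m).
Proof.
move=> x y [x0 x1] [y0 y1] l /andP[l0 l1]; split.
  by move=> i; rewrite !mxE; apply: addr_ge0; apply: mulr_ge0 => //; lra.
rewrite (eq_bigr (fun i => l * x ord0 i + (1 - l) * y ord0 i)) => [|i _]; last by rewrite !mxE.
by rewrite big_split /= -!mulr_sumr x1 y1; ring.
Qed.

Lemma simplex_le1 m (x : 'rV[R]_m) i : simplex m x -> x ord0 i <= 1.
Proof.
by move=> [x0 <-]; rewrite (bigD1 i) //= lerDl; apply: sumr_ge0 => j _.
Qed.

Lemma simplex_sumB m (x y : 'rV[R]_m) : simplex m x -> simplex m y ->
  \sum_i (x - y) ord0 i = 0.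
Proof.
move=> [_ x1] [_ y1].
by rewrite (eq_bigr (fun i => x ord0 i - y ord0 i)) ?sumrB ?x1 ?y1 ?subrr // => i _; rewrite !mxE.
Qed.

Lemma simplex_dist_le2 m (x y : 'rV[R]_m) : simplex m x -> simplex m y ->
  dot (x - y) (x - y) <= 2.
Proof.
move=> sx sy; have [x0 x1] := sx; have [y0 y1] := sy.
have : dot (x - y) (x - y) <= \sum_i (x ord0 i + y ord0 i).
  apply: ler_sum => i _; have := simplex_le1 i sx; have := simplex_le1 i sy.
  have := x0 i; have := y0 i; rewrite !mxE; nra.
by rewrite big_split /= x1 y1.
Qed.

Lemma delta_mx_simplex n (j : 'I_n) : simplex n (delta_mx 0 j : 'rV[R]_n).
Proof.
split=> [i|]; first by rewrite mxE ler0n.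
rewrite (bigD1 j) //= big1 => [|i ij]; first by rewrite mxE !eqxx addr0.
by rewrite mxE (negbTE ij) andbF.
Qed.

Lemma dot_delta_mx n (j : 'I_n) (v : 'rV[R]_n) : dot (delta_mx 0 j) v = v ord0 j.
Proof.
rewrite /dot (bigD1 j) //= big1 => [|i ij]; first by rewrite mxE !eqxx mul1r addr0.
by rewrite mxE (negbTE ij) andbF mul0r.
Qed.

(* The n-1 independent rows x i - p form a basis of the hyperplane {sum = 0}. *)
Lemma sum0_orthogonal n (p : 'rV[R]_n) (x : 'I_n.-1 -> 'rV[R]_n) (c : 'rV[R]_n) :
  (0 < n)%N -> row_free (\matrix_(i < n.-1) (x i - p)) ->
  (forall i, \sum_k (x i - p) ord0 k = 0) -> (forall i, dot (x i - p) c = 0) ->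
  forall v : 'rV[R]_n, \sum_k v ord0 k = 0 -> dot v c = 0.
Proof.
move=> n0 free sum0 orth v v0.
set V := \matrix_(i < n.-1) (x i - p).
pose one : 'cV[R]_n := const_mx 1.
have dot_mx (u : 'rV[R]_n) : dot u c = (u *m c^T) ord0 ord0.
  by rewrite /dot !mxE; apply: eq_bigr => i _; rewrite !mxE.
have ker_one (u : 'rV[R]_n) : \sum_k u ord0 k = 0 -> (u <= kermx one)%MS.
  move=> u0; apply/sub_kermxP/matrixP => i j; rewrite !mxE ord1 -[RHS]u0.
  by apply: eq_bigr => k _; rewrite !mxE mulr1.
have VK : (V <= kermx one)%MS.
  apply/sub_kermxP/matrixP => i j; rewrite !mxE -[RHS](sum0 i).
  by apply: eq_bigr => k _; rewrite !mxE mulr1.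
have rank_one : \rank one = 1%N.
  rewrite -mxrank_tr rank_rV; case: eqP => // /matrixP/(_ ord0 (Ordinal n0)).
  by rewrite !mxE => /eqP; rewrite oner_eq0.
have KV : (kermx one <= V)%MS.
  rewrite -(mxrank_leqif_sup VK).2 mxrank_ker rank_one subn1.
  by move: free; rewrite /row_free.
case/submxP: (submx_trans (ker_one v v0) KV) => E ->.
rewrite dot_mx -mulmxA.
have -> : V *m c^T = 0.
  apply/matrixP => i j; rewrite ord1 [RHS]mxE -(orth i) dot_mx !mxE.
  by apply: eq_bigr => k _; rewrite !mxE.
by rewrite mulmx0 mxE.
Qed.

Lemma forecast_domain_orthogonal n (D : set 'rV[R]_n) (x c : 'rV[R]_n) :
  forecast_domain D -> D x -> (forall y, D y -> dot (y - x) c = 0) ->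
  forall v : 'rV[R]_n, \sum_k v ord0 k = 0 -> dot v c = 0.
Proof.
move=> [_ [Dsub [p [xs [Dp [Dxs free]]]]]] Dx orth.
have n0 : (0 < n)%N.
  case: n D x c Dx Dsub {orth p xs Dp Dxs free} => // D x c Dx Dsub.
  by have [_] := Dsub _ Dx; rewrite big_ord0 => /eqP; rewrite eq_sym oner_eq0.
apply: (sum0_orthogonal n0 free) => i; first exact: simplex_sumB (Dsub _ _) (Dsub _ _).
have -> : xs i - p = (xs i - x) - (p - x) by rewrite opprB addrA subrK.
by rewrite dotBl !orth // subrr.
Qed.

End Simplex.
Arguments delta_mx_simplex {R n}.

Lemma finite_pos_lbound (R : realType) (I : finType) (f : I -> R) :
  (forall i, 0 < f i) -> exists2 d : R, 0 < d & forall i, d <= f i.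
Proof.
move=> f_gt0; set S := \sum_i (f i)^-1.
have S0 : 0 <= S by apply: sumr_ge0 => i _; rewrite invr_ge0 ltW.
exists (1 / (1 + S)) => [|i]; first by apply: divr_gt0 => //; lra.
have fi := f_gt0 i.
have : (f i)^-1 <= S.
  by rewrite /S (bigD1 i) //= lerDl; apply: sumr_ge0 => j _; rewrite invr_ge0 ltW.
have : f i * (f i)^-1 = 1 by rewrite mulfV // gt_eqF.
rewrite ler_pdivrMr; nra.
Qed.

Section ScoringRule.
Variables (R : realType) (n : nat) (D : set 'rV[R]_n).
Variables (s : 'rV[R]_n -> 'I_n -> R) (g : 'rV[R]_n -> 'rV[R]_n).
Hypothesis HD : forecast_domain D.
Hypothesis Hproper : proper_scoring_rule D s.
Hypothesis Hcont : continuous_scoring_rule D s.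
Hypothesis Hg : exposure_function D s g.

Local Notation G := (expected_score s).

Let D_convex : convex_set D. Proof. by case: HD. Qed.

Definition score_vec (p : 'rV[R]_n) : 'rV[R]_n := \row_j s p j.

Lemma expected_score_dot p : G p = dot p (score_vec p).
Proof. by apply: eq_bigr => j _; rewrite mxE. Qed.

Lemma dot_score_vec y p : dot y (score_vec p) = \sum_j y ord0 j * s p j.
Proof. by apply: eq_bigr => j _; rewrite mxE. Qed.

Lemma score_vec_subgradient p : D p -> is_subgradient D G p (score_vec p).
Proof.
move=> Dp y Dy; have [le_score _] := Hproper Dy Dp.
by rewrite dotC dotBl -expected_score_dot dot_score_vec addrC subrK.
Qed.

Lemma expected_score_convex : convex_on D G.
Proof.
apply: (subgradient_convex_on (f := G) D_convex) => p Dp.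
by exists (score_vec p); apply: score_vec_subgradient.
Qed.

Lemma exposure_subgradient p : D p -> is_subgradient D G p (g p).
Proof.
by move=> Dp; apply: rel_gradient_subgradient D_convex expected_score_convex Dp (Hg Dp).2.
Qed.

Lemma score_vec_le_exposure p y : D p -> D y ->
  dot (score_vec p) (y - p) <= dot (g p) (y - p).
Proof.
move=> Dp Dy.
exact: subgradient_le_rel_gradient D_convex Dp Dy (Hg Dp).2 (score_vec_subgradient Dp).
Qed.

Lemma score_vec_continuous p (eps : R) : D p -> 0 < eps ->
  exists2 delta : R, 0 < delta & forall q, D q -> norm2 (q - p) < delta ->
    forall j, `|s q j - s p j| < eps.
Proof.
move=> Dp e0; have /(_ _)/cid2 dj := fun j => Hcont j Dp e0.
have [delta d0 le_delta] := finite_pos_lbound (fun j => s2valP (dj j)).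
exists delta => // q Dq qp j.
by apply: (s2valP' (dj j)) => //; apply: lt_le_trans (le_delta j).
Qed.

(* Exposure at p is a subgradient of G at p and score_vec q one at q, so
   <g p, q - p> <= G q - G p <= <score_vec q, q - p>; let q tend to p. *)
Lemma exposure_le_score_vec p y : D p -> D y ->
  dot (g p) (y - p) <= dot (score_vec p) (y - p).
Proof.
move=> Dp Dy; set C := \sum_k `|(y - p) ord0 k|.
apply: (le_of_le_add_eps (sumr_ge0 _ (fun k _ => normr_ge0 _) : 0 <= C)) => eps e0.
have [delta d0 close] := score_vec_continuous Dp e0.
have [t /andP[t0 t1] tN] := exists_small_step (norm2_ge0 (y - p)) d0.
set q := p + t *: (y - p).
have Dq : D q by apply: convex_segment; rewrite // (ltW t0) t1.
have qp : q - p = t *: (y - p) by rewrite /q addrAC subrr add0r.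
have le_q : dot (g p) (y - p) <= dot (score_vec q) (y - p).
  have := exposure_subgradient Dp Dq; have := score_vec_subgradient Dq Dp.
  rewrite qp -opprB qp !dotNr !dotZr; nra.
suff : dot (score_vec q - score_vec p) (y - p) <= eps * C by rewrite dotBl; lra.
rewrite /dot /C mulr_sumr; apply: ler_sum => k _.
apply: le_trans (ler_norm _) _; rewrite normrM.
apply: ler_wpM2r => //; rewrite !mxE; apply: ltW; apply: close => //.
by rewrite qp norm2Z ?ltW.
Qed.

Lemma score_vec_exposure p (v : 'rV[R]_n) : D p -> \sum_k v ord0 k = 0 ->
  dot v (score_vec p) = dot v (g p).
Proof.
move=> Dp v0; apply/eqP; rewrite -subr_eq0 -dotBr; apply/eqP.
apply: (forecast_domain_orthogonal HD Dp) v0 => y Dy.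
apply/eqP; rewrite dotBr subr_eq0 eq_le (dotC (y - p) (score_vec p)) (dotC (y - p) (g p)).
by rewrite score_vec_le_exposure // exposure_le_score_vec.
Qed.

End ScoringRule.

Section QAPool.
Variables (R : realType) (n : nat) (D : set 'rV[R]_n).
Variables (s : 'rV[R]_n -> 'I_n -> R) (g : 'rV[R]_n -> 'rV[R]_n).
Hypothesis HD : forecast_domain D.
Hypothesis Hproper : proper_scoring_rule D s.
Hypothesis Hcont : continuous_scoring_rule D s.
Hypothesis Hg : exposure_function D s g.
Hypothesis Hconvexp : convex_exposure D g.
Variables (m : nat) (ps : 'I_m -> 'rV[R]_n).
Hypothesis Dps : forall i, D (ps i).

Local Notation pool := (QA_pool D g ps).

Lemma QA_pool_spec w : simplex m w ->
  D (pool w) /\ g (pool w) = \sum_i w ord0 i *: g (ps i).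
Proof.
move=> [w0 w1]; apply: (@xgetPex _ 0 [set p | D p /\ g p = _]).
have [|p Dp gp] := convex_set_comb Hconvexp w0 w1 (c := fun i => g (ps i)).
  by move=> i; exists (ps i).
by exists p.
Qed.

Lemma QA_pool_simplex w : simplex m w -> simplex n (pool w).
Proof. by move=> /QA_pool_spec[Dp _]; case: HD => _ [/(_ _ Dp)]. Qed.

Definition QA_loss_subgrad (j : 'I_n) (w : 'rV[R]_m) : 'rV[R]_m :=
  \row_k dot (pool w - delta_mx 0 j) (g (ps k)).

(* Since pool w - e_j sums to 0, pairing it with g equals pairing it with the
   score vector; properness then compares the scores of the two pools. *)
Lemma QA_loss_subgradient j w : simplex m w ->
  is_subgradient (simplex m) (QA_loss D s g ps j) w (QA_loss_subgrad j w).
Proof.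
move=> sw y sy; rewrite /QA_loss.
have [Dx gx] := QA_pool_spec sw; have [Dy gy] := QA_pool_spec sy.
set x := pool w in Dx gx *; set x' := pool y in Dy gy *.
have sum0 : \sum_k (x - delta_mx 0 j) ord0 k = 0.
  exact: simplex_sumB (QA_pool_simplex sw) (delta_mx_simplex j).
have -> : dot (QA_loss_subgrad j w) (y - w) = dot (x - delta_mx 0 j) (g x' - g x).
  rewrite gx gy -sumrB dot_sumr {1}/dot; apply: eq_bigr => k _.
  by rewrite -scalerBl dotZr !mxE mulrC.
rewrite dotBr -!(score_vec_exposure HD Hproper Hcont Hg) //.
have [le_score _] := Hproper Dx Dy.
rewrite !dotBl !dot_delta_mx !mxE !dot_score_vec; lra.
Qed.

Lemma QA_loss_subgrad_bound j w M : simplex m w -> (forall p, D p -> norm2 (g p) <= M) ->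
  dot (QA_loss_subgrad j w) (QA_loss_subgrad j w) <= 2 * m%:R * M ^+ 2.
Proof.
move=> sw HM; have -> : 2 * m%:R * M ^+ 2 = \sum_(k < m) (2 * M ^+ 2).
  by rewrite sumr_const card_ord -mulr_natr; ring.
apply: ler_sum => k _; rewrite -expr2 mxE.
apply: le_trans (CauchySchwarz _ _) _.
have := simplex_dist_le2 (QA_pool_simplex sw) (delta_mx_simplex j).
have := dot_le_sqr_norm2 (HM _ (Dps k)).
have := dot_ge0 (g (ps k)); have := dot_ge0 (pool w - delta_mx 0 j).
nra.
Qed.

End QAPool.

Section OnlineGradientDescent.
Variable R : realType.

Lemma ogd_update_simplex m (z P : 'rV[R]_m) : ogd_update z P -> simplex m P.
Proof.
case=> inside outside; case: (EM (simplex m z)) => sz; first by rewrite inside.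
by case: (outside sz).
Qed.

Lemma ogd_update_dist m (z P y : 'rV[R]_m) : ogd_update z P -> simplex m y ->
  dot (z - P) (z - P) + dot (P - y) (P - y) <= dot (z - y) (z - y).
Proof.
case=> inside outside sy; case: (EM (simplex m z)) => sz.
  by rewrite inside // subrr dot0r add0r.
exact: projection_pythagoras (@simplex_convex R m) (outside sz) sy.
Qed.

(* u - d lies in the normal cone of the simplex at w: stepping along -d
   instead of -u only adds a normal component, which the projection absorbs. *)
Lemma ogd_step m (w ws d u P : 'rV[R]_m) (eta : R) :
  0 < eta -> simplex m ws ->
  (forall y, simplex m y -> dot u (y - w) <= dot d (y - w)) ->
  ogd_update (w - eta *: d) P ->
  dot (P - ws) (P - ws) <=
    dot (w - ws) (w - ws) - 2 * eta * dot d (w - ws) + eta ^+ 2 * dot u u.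
Proof.
move=> eta0 sws ud upd; have sP := ogd_update_simplex upd.
have := ogd_update_dist upd sws.
have shift y : w - eta *: d - y = (w - y) - eta *: d by rewrite addrAC.
rewrite !shift !dot_sqrBZ !(dotC _ d).
have := ud _ sP; rewrite -opprB !dotNr => du.
have := dot_ge0 (w - P - eta *: u); rewrite dot_sqrBZ (dotC _ u).
have : eta * dot d (w - P) <= eta * dot u (w - P) by rewrite ler_pM2l //; lra.
lra.
Qed.

Lemma ogd_step_regret m (f : 'rV[R]_m -> R) (w ws d u P : 'rV[R]_m) (A : R) (t : nat) :
  0 < A -> (0 < t)%N -> convex_on (simplex m) f -> simplex m w -> simplex m ws ->
  is_subgradient (simplex m) f w u -> dot u u <= 2 * A ^+ 2 ->
  rel_gradient (simplex m) f w d ->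
  ogd_update (w - (1 / (A * Num.sqrt t%:R)) *: d) P ->
  f w - f ws <= A * Num.sqrt t%:R / 2 * (dot (w - ws) (w - ws) - dot (P - ws) (P - ws))
                + A / Num.sqrt t%:R.
Proof.
move=> A0 t0 cf sw sws fu uA fd upd.
set b := Num.sqrt t%:R; have b0 : 0 < b by rewrite sqrtr_gt0 ltr0n.
set eta := 1 / (A * b); have eta0 : 0 < eta by rewrite divr_gt0 ?mulr_gt0.
have le_d : f w - f ws <= dot d (w - ws).
  have := rel_gradient_subgradient (@simplex_convex R m) cf sw fd sws.
  by rewrite -opprB dotNr; lra.
have := ogd_step eta0 sws
  (fun y sy => subgradient_le_rel_gradient (@simplex_convex R m) sw sy fd fu) upd.
set Dw := dot (w - ws) _; set DP := dot (P - ws) _ => step.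
have c0 : 0 < A * b / 2 by rewrite divr_gt0 ?mulr_gt0.
have ceta : A * b / 2 * (2 * eta) = 1 by rewrite /eta; field; rewrite ?gt_eqF.
have ceta2 : A * b / 2 * (eta ^+ 2 * (2 * A ^+ 2)) = A / b.
  by rewrite /eta; field; rewrite ?gt_eqF.
have uA' : eta ^+ 2 * dot u u <= eta ^+ 2 * (2 * A ^+ 2) by rewrite ler_wpM2l ?sqr_ge0.
have : A * b / 2 * (2 * eta * dot d (w - ws)) <=
       A * b / 2 * (Dw - DP + eta ^+ 2 * (2 * A ^+ 2)).
  by rewrite ler_pM2l //; lra.
rewrite mulrA ceta mul1r mulrDr ceta2; lra.
Qed.

Lemma sqrt_succ_inv_le (t : nat) :
  1 / Num.sqrt (t.+1%:R : R) <= 2 * (Num.sqrt t.+1%:R - Num.sqrt t%:R).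
Proof.
set a := Num.sqrt (t%:R : R); set b := Num.sqrt (t.+1%:R : R).
have a0 : 0 <= a by apply: sqrtr_ge0.
have b0 : 0 < b by rewrite sqrtr_gt0 ltr0n.
have ab : b ^+ 2 = a ^+ 2 + 1 by rewrite !sqr_sqrtr ?ler0n // -addn1 natrD.
rewrite ler_pdivrMr //; have := sqr_ge0 (a - b); nra.
Qed.

(* Summation by parts with the nondecreasing weights sqrt t, carried out by
   induction on the invariant sum_(t <= T') r t <= A sqrt T' (3 - Dt (T'+1) / 2). *)
Lemma regret_telescope (A : R) (r Dt : nat -> R) (T : nat) : 0 <= A ->
  (forall t, (1 <= t <= T.+1)%N -> 0 <= Dt t <= 2) ->
  (forall t, (1 <= t <= T)%N ->
     r t <= A * Num.sqrt t%:R / 2 * (Dt t - Dt t.+1) + A / Num.sqrt t%:R) ->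
  \sum_(1 <= t < T.+1) r t <= 3 * A * Num.sqrt T%:R.
Proof.
move=> A0 Dt02 step.
suff inv T' : (T' <= T)%N ->
    \sum_(1 <= t < T'.+1) r t <= A * Num.sqrt T'%:R * (3 - Dt T'.+1 / 2).
  have := inv T (leqnn T); have /andP[D0 _] := Dt02 T.+1 (leqnn _).
  have := mulr_ge0 A0 (sqrtr_ge0 (T%:R : R)); nra.
elim: T' => [|T' IH] le_T; first by rewrite big_geq // sqrtr0 mulr0 mul0r.
rewrite big_nat_recr //=.
have := IH (ltnW le_T); have := step T'.+1 le_T.
have := sqrt_succ_inv_le T'.
set a := Num.sqrt (T'%:R : R); set b := Num.sqrt (T'.+1%:R : R).
have a0 : 0 <= a by apply: sqrtr_ge0.
have b0 : 0 < b by rewrite sqrtr_gt0 ltr0n.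
have ab : a <= b by rewrite ler_sqrt ?ler0n // ler_nat.
set X := Dt T'.+1; set Y := Dt T'.+2 => h1 h2 h3.
have /andP[X0 X2] : 0 <= X <= 2 := Dt02 T'.+1 (ltnW le_T).
have : A / b <= A * ((b - a) * (3 - X / 2)).
  apply: ler_wpM2l => //.
  have : 0 <= (b - a) * (1 - X / 2) by apply: mulr_ge0; lra.
  rewrite mul1r in h1; nra.
nra.
Qed.

Lemma ogd_iterates_simplex m (z w : nat -> 'rV[R]_m) (T : nat) :
  simplex m (w 1%N) -> (forall t, (1 <= t <= T)%N -> ogd_update (z t) (w t.+1)) ->
  forall t, (1 <= t <= T.+1)%N -> simplex m (w t).
Proof.
move=> sw1 upd [//|[//|t]] /andP[_ tT].
exact: ogd_update_simplex (upd t.+1 tT).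
Qed.

Lemma ogd_regret m (T : nat) (A : R) (f : nat -> 'rV[R]_m -> R)
    (u : nat -> 'rV[R]_m -> 'rV[R]_m) (w d : nat -> 'rV[R]_m) (ws : 'rV[R]_m) :
  0 <= A ->
  (forall t x, (1 <= t <= T)%N -> simplex m x -> is_subgradient (simplex m) (f t) x (u t x)) ->
  (forall t x, (1 <= t <= T)%N -> simplex m x -> dot (u t x) (u t x) <= 2 * A ^+ 2) ->
  simplex m (w 1%N) ->
  (forall t, (1 <= t <= T)%N -> rel_gradient (simplex m) (f t) (w t) (d t)) ->
  (forall t, (1 <= t <= T)%N ->
     ogd_update (w t - (1 / (A * Num.sqrt t%:R)) *: d t) (w t.+1)) ->
  simplex m ws ->
  \sum_(1 <= t < T.+1) (f t (w t) - f t ws) <= 3 * A * Num.sqrt T%:R.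
Proof.
move=> A0 fu uA sw1 fd upd sws; have sw := ogd_iterates_simplex sw1 upd.
apply: (regret_telescope (Dt := fun t => dot (w t - ws) (w t - ws)) A0) => [t tT|t tT].
  by have := simplex_dist_le2 (sw t tT) sws; rewrite dot_ge0.
have swt : simplex m (w t) by apply: sw; case/andP: tT => -> /= /leqW.
have [A_eq0|A_neq0] := eqVneq A 0.
  have /dot_eq0 u0 : dot (u t (w t)) (u t (w t)) = 0.
    apply/eqP; rewrite eq_le dot_ge0 andbT.
    by have := uA t _ tT swt; rewrite A_eq0 expr0n mulr0.
  have := fu t _ tT swt ws sws; rewrite u0 dotC dot0r A_eq0 !mul0r; lra.
have A_gt0 : 0 < A by rewrite lt_def A_neq0.
have t_gt0 : (0 < t)%N by case/andP: tT.
have cf : convex_on (simplex m) (f t).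
  apply: subgradient_convex_on (@simplex_convex R m) _ => x sx.
  by exists (u t x); apply: fu.
exact: ogd_step_regret A_gt0 t_gt0 cf swt sws (fu t _ tT swt) (uA t _ tT swt)
  (fd t tT) (upd t tT).
Qed.

End OnlineGradientDescent.

Theorem theorem5p5 (R : realType) (n m T : nat)
  (D : set 'rV[R]_n) (s : 'rV[R]_n -> 'I_n -> R) (g : 'rV[R]_n -> 'rV[R]_n)
  (M : R)
  (HD : forecast_domain D)
  (Hproper : proper_scoring_rule D s)
  (Hbounded : bounded_scoring_rule D s)
  (Hcont : continuous_scoring_rule D s)
  (HG : strictly_convex_on D (expected_score s))
  (Hg : exposure_function D s g)
  (Hconvexp : convex_exposure D g)
  (HM : forall p, D p -> norm2 (g p) <= M)
  (ps : nat -> 'I_m -> 'rV[R]_n) (j : nat -> 'I_n)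
  (Hps : forall t i, (1 <= t <= T)%N -> D (ps t i))
  (w : nat -> 'rV[R]_m) (grad : nat -> 'rV[R]_m)
  (Hw1 : simplex m (w 1%N))
  (Hgrad : forall t, (1 <= t <= T)%N ->
     rel_gradient (simplex m) (QA_loss D s g (ps t) (j t)) (w t) (grad t))
  (Hstep : forall t, (1 <= t <= T)%N ->
     ogd_update (w t - step_size M m t *: grad t) (w t.+1)) :
  forall wstar : 'rV[R]_m, simplex m wstar ->
    \sum_(1 <= t < T.+1)
       (s (QA_pool D g (ps t) wstar) (j t) - s (QA_pool D g (ps t) (w t)) (j t))
    <= 3 * Num.sqrt (m%:R) * M * Num.sqrt (T%:R).
Proof.
move=> ws sws; set A := M * Num.sqrt m%:R.
have [p Dp] : exists p, D p by case: HD => _ [_ [p [_ [Dp _]]]]; exists p.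
have A0 : 0 <= A by rewrite mulr_ge0 ?sqrtr_ge0 // (le_trans (norm2_ge0 _) (HM _ Dp)).
have -> : 3 * Num.sqrt m%:R * M = 3 * A by rewrite /A; ring.
pose L t := QA_loss D s g (ps t) (j t).
rewrite (eq_bigr (fun t => L t (w t) - L t ws)) => [|t _]; last first.
  by rewrite /L /QA_loss opprK addrC.
apply: (ogd_regret (u := fun t => QA_loss_subgrad D g (ps t) (j t)) (d := grad) A0) => //.
- move=> t x tT.
  exact: (QA_loss_subgradient HD Hproper Hcont Hg Hconvexp (fun i => Hps t i tT)).
- move=> t x tT sx; have -> : 2 * A ^+ 2 = 2 * m%:R * M ^+ 2.
    by rewrite exprMn sqr_sqrtr ?ler0n //; ring.
  exact: (QA_loss_subgrad_bound HD Hconvexp (fun i => Hps t i tT)).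
- by move=> t tT; have := Hstep t tT; rewrite /step_size sqrtrM ?ler0n // mulrA.
Qed.
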